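(* Let $A=\{a_0,a_1,\dots,a_{k-1}\}\subseteq\mathcal{C}_n$ with $a_0<\dots<a_{k-1}$, and assume the simplex $\sigma^{(n)}_k(A)$ is internal, i.e. $0\notin A$ and $n-1\notin A$. Let $m\in\{0,\dots,k-1\}$. Then the set $\mathcal{DN}^{\,2}_m=\{\overline{a_m}\}\cup\mathcal{L}^{n-1}_{a_m}\left(\sigma^{(n)}_k(A)\right)\cup\mathcal{L}^{n-2}_{a_m}\left(\sigma^{(n)}_k(A)\right)$ is a subsemiring of $\sigma^{(n)}_k(A)$.
   Context: $\mathcal{C}_n=\{0,1,\dots,n-1\}$ with its usual order; $\widehat{\mathcal{E}}_{\mathcal{C}_n}$ is the set of all order-preserving maps $\mathcal{C}_n\to\mathcal{C}_n$ (not required to fix $0$), a semiring with $(\alpha+\beta)(x)=\max(\alpha(x),\beta(x))$ and $(\alpha\cdot\beta)(x)=\beta(\alpha(x))$. The simplex $\sigma^{(n)}_k(A)$ is the set of all $\alpha\in\widehat{\mathcal{E}}_{\mathcal{C}_n}$ with $\mathrm{im}(\alpha)\subseteq A$. $\overline{x}$ is the constant map with value $x$. For $s\in\{0,\dots,n-1\}$, the layer $\mathcal{L}^{s}_{a_m}\left(\sigma^{(n)}_k(A)\right)$ is the set of $\alpha\in\sigma^{(n)}_k(A)$ with exactly $s$ elements $i\in\mathcal{C}_n$ satisfying $\alpha(i)=a_m$. *)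

From mathcomp Require Import all_boot.
Set Implicit Arguments. Unset Strict Implicit. Unset Printing Implicit Defensive.

(* C_n = 'I_n with its usual order; elements of \hat E_{C_n} are finite
   functions 'I_n -> 'I_n that are order-preserving. *)
Definition order_preserving (n : nat) (f : {ffun 'I_n -> 'I_n}) : bool :=
  [forall x : 'I_n, forall y : 'I_n, (x <= y)%N ==> (f x <= f y)%N].

Definition emap_add (n : nat) (f g : {ffun 'I_n -> 'I_n}) : {ffun 'I_n -> 'I_n} :=
  [ffun x => if (f x <= g x)%N then g x else f x].

Definition emap_mul (n : nat) (f g : {ffun 'I_n -> 'I_n}) : {ffun 'I_n -> 'I_n} :=
  [ffun x => g (f x)].

Definition emap_const (n : nat) (c : 'I_n) : {ffun 'I_n -> 'I_n} := [ffun _ => c].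

Definition simplex (n : nat) (A : {set 'I_n}) : {set {ffun 'I_n -> 'I_n}} :=
  [set f | order_preserving f && [forall x, f x \in A]].

Definition layer (n : nat) (A : {set 'I_n}) (s : nat) (c : 'I_n)
  : {set {ffun 'I_n -> 'I_n}} :=
  [set f in simplex A | #|[set i | f i == c]| == s].

Definition DN2 (n : nat) (A : {set 'I_n}) (c : 'I_n) : {set {ffun 'I_n -> 'I_n}} :=
  emap_const c |: (layer A n.-1 c :|: layer A (n - 2) c).

From mathcomp Require Import all_boot.
From mathcomp Require Import zify.

Set Implicit Arguments.
Unset Strict Implicit.
Unset Printing Implicit Defensive.

(* Since the constant map has the full fibre over [c], a map of the simplex
   lies in DN^2 exactly when its fibre over [c] has at least n - 2 points.
   Fibres of order-preserving maps are intervals, so the fibre of [f + g]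
   contains that of [f] or that of [g], and the fibre of [f * g] contains that
   of [f] as soon as [g] fixes [c]. Finally an internal [g] with such a large
   fibre must fix [c]. *)

Lemma card_ord_geq n c : #|[set x : 'I_n | c <= x]| = n - c.
Proof.
rewrite -sum1dep_card (eq_bigl (fun i : 'I_n => xpredT i && (c <= i))) //.
by rewrite -(big_geq_mkord c n xpredT (fun=> 1)) sum_nat_const_nat muln1.
Qed.

Lemma card_ord_leq n c : c < n -> #|[set x : 'I_n | x <= c]| = c.+1.
Proof.
move=> lt_cn; have -> : [set x : 'I_n | x <= c] = ~: [set x : 'I_n | c.+1 <= x].
  by apply/setP => x; rewrite !inE -leqNgt.
by rewrite cardsCs setCK card_ord_geq card_ord; lia.
Qed.

Section Endomaps.

Variable n : nat.
Implicit Types (f g : {ffun 'I_n -> 'I_n}) (A : {set 'I_n}) (c x y : 'I_n).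

Definition fibre f c : {set 'I_n} := [set x | f x == c].

Lemma order_preservingP f : reflect {homo f : x y / x <= y} (order_preserving f).
Proof.
apply: (iffP forallP) => [f_op x y | f_homo x].
  by move: (f_op x) => /forallP /(_ y) /implyP.
by apply/forallP => y; apply/implyP/f_homo.
Qed.

Lemma in_simplex A f :
  (f \in simplex A) = order_preserving f && [forall x, f x \in A].
Proof. by rewrite inE. Qed.

Lemma emap_addE f g x : val (emap_add f g x) = maxn (f x) (g x).
Proof. by rewrite ffunE; case: leqP. Qed.

Lemma emap_const_simplex A c : c \in A -> emap_const c \in simplex A.
Proof.
move=> cA; rewrite in_simplex; apply/andP; split.
  by apply/order_preservingP => x y _; rewrite !ffunE.
by apply/forallP => x; rewrite ffunE.
Qed.

Lemma emap_add_simplex A f g :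
  f \in simplex A -> g \in simplex A -> emap_add f g \in simplex A.
Proof.
rewrite !in_simplex => /andP[/order_preservingP f_op /forallP fA].
move=> /andP[/order_preservingP g_op /forallP gA].
apply/andP; split.
  apply/order_preservingP => x y le_xy; rewrite !emap_addE.
  by rewrite geq_max !leq_max f_op // g_op // orbT.
by apply/forallP => x; rewrite ffunE; case: ifP.
Qed.

Lemma emap_mul_simplex A f g :
  f \in simplex A -> g \in simplex A -> emap_mul f g \in simplex A.
Proof.
rewrite !in_simplex => /andP[/order_preservingP f_op _].
move=> /andP[/order_preservingP g_op /forallP gA].
apply/andP; split; last by apply/forallP => x; rewrite ffunE.
by apply/order_preservingP => x y le_xy; rewrite !ffunE g_op ?f_op.
Qed.

Lemma fibre_emap_addE f g c x :
  (x \in fibre (emap_add f g) c) = (maxn (f x) (g x) == c).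
Proof. by rewrite inE -val_eqE emap_addE. Qed.

(* The fibres of order-preserving maps are intervals: if [f x = c = g y], then
   [f y <= c] when [y <= x] and [g x <= c] when [x <= y]. *)
Lemma fibre_emap_add f g c :
  order_preserving f -> order_preserving g ->
  (fibre f c \subset fibre (emap_add f g) c) ||
  (fibre g c \subset fibre (emap_add f g) c).
Proof.
move=> /order_preservingP f_op /order_preservingP g_op.
have [g_le_c | ] := boolP [forall x in fibre f c, g x <= c].
  apply/orP; left; apply/subsetP => x fx_c; rewrite fibre_emap_addE.
  move: (forall_inP g_le_c x fx_c); rewrite inE in fx_c.
  by rewrite (eqP fx_c) => /maxn_idPl ->.
case/forall_inPn => x0; rewrite inE -ltnNge => /eqP fx0_c c_lt_gx0.
apply/orP; right; apply/subsetP => y; rewrite inE fibre_emap_addE => /eqP gy_c.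
rewrite gy_c; apply/eqP/maxn_idPr; have [le_yx0 | lt_x0y] := leqP y x0.
  by rewrite -fx0_c; apply: f_op.
by have := g_op _ _ (ltnW lt_x0y); rewrite gy_c leqNgt c_lt_gx0.
Qed.

Lemma fibre_emap_mul f g c : g c = c -> fibre f c \subset fibre (emap_mul f g) c.
Proof. by move=> gc_c; apply/subsetP => x; rewrite !inE ffunE => /eqP ->; rewrite gc_c. Qed.

Lemma fibre_emap_const c : fibre (emap_const c) c = setT.
Proof. by apply/setP => x; rewrite !inE /emap_const ffunE eqxx. Qed.

Lemma full_fibre_emap_const f c : #|fibre f c| = n -> f = emap_const c.
Proof.
move=> fibre_full; have f_c : fibre f c = setT.
  by apply/eqP; rewrite eqEcard subsetT cardsT card_ord fibre_full leqnn.
by apply/ffunP => x; move/setP/(_ x): f_c; rewrite !inE /emap_const ffunE => /eqP.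
Qed.

Lemma in_DN2 A c f : c \in A ->
  (f \in DN2 A c) = (f \in simplex A) && (n - 2 <= #|fibre f c|).
Proof.
move=> cA; rewrite !inE -/(fibre f c) -!in_simplex; apply/idP/idP.
  case/or3P => [/eqP -> | /andP[-> /eqP ->] | /andP[-> /eqP ->]] /=; [ | lia | lia].
  by rewrite emap_const_simplex // fibre_emap_const cardsT card_ord leq_subr.
case/andP => -> le_n2_card; have [fibre_full | not_full] := eqVneq #|fibre f c| n.
  by rewrite (full_fibre_emap_const fibre_full) eqxx.
have := subset_leq_card (subsetT (fibre f c)); rewrite cardsT card_ord => card_le_n.
apply/orP; right; rewrite /=.
by move: #|_| not_full le_n2_card card_le_n => s; lia.
Qed.

Lemma card_fibre_gt g c : order_preserving g -> c < g c -> #|fibre g c| <= c.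
Proof.
move=> /order_preservingP g_op lt_c_gc.
have : fibre g c \subset ~: [set x : 'I_n | c <= x].
  apply/subsetP => x; rewrite !inE => /eqP gx_c; apply: contraTN lt_c_gc => le_cx.
  by rewrite -leqNgt -{2}gx_c g_op.
move/subset_leq_card; rewrite [#|~: _|]cardsCs setCK card_ord card_ord_geq.
by rewrite subKn // ltnW.
Qed.

Lemma card_fibre_lt g c : order_preserving g -> g c < c -> #|fibre g c| + c < n.
Proof.
move=> /order_preservingP g_op lt_gc_c.
have : fibre g c \subset ~: [set x : 'I_n | x <= c].
  apply/subsetP => x; rewrite !inE => /eqP gx_c; apply: contraTN lt_gc_c => le_xc.
  by rewrite -leqNgt -{1}gx_c g_op.
move/subset_leq_card; rewrite [#|~: _|]cardsCs setCK card_ord card_ord_leq //.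
by rewrite leq_subRL // addSn addnC.
Qed.

(* Off the fixed point, one of the intervals [0, c] or [c, n - 1] avoids the
   fibre over [c]; since [g] misses both [0] and [n - 1], such an interval has
   at least three points. *)
Lemma internal_simplex_fixes A g c : {in A, forall x, 0 < x < n.-1} ->
  g \in simplex A -> n - 2 <= #|fibre g c| -> g c = c.
Proof.
move=> A_internal; rewrite in_simplex => /andP[g_op /forallP gA] large_fibre.
have /andP[gc_gt0 gc_lt] := A_internal _ (gA c).
apply/val_inj; case: (ltngtP (g c) c) => [lt_gc_c | lt_c_gc | //].
  by have := card_fibre_lt g_op lt_gc_c; lia.
by have := card_fibre_gt g_op lt_c_gc; lia.
Qed.

End Endomaps.

Theorem proposition4 (n k : nat) (a : 'I_k -> 'I_n)
  (a_incr : forall i j : 'I_k, (i < j)%N -> (a i < a j)%N)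
  (internal : forall i : 'I_k, (val (a i) != 0%N) && (val (a i) != n.-1))
  (m : 'I_k) :
  let A := [set a i | i in 'I_k] in
  DN2 A (a m) \subset simplex A /\
  (forall f g, f \in DN2 A (a m) -> g \in DN2 A (a m) ->
     emap_add f g \in DN2 A (a m) /\ emap_mul f g \in DN2 A (a m)).
Proof.
move=> A.
have A_internal : {in A, forall x : 'I_n, 0 < x < n.-1}.
  move=> _ /imsetP[i _ ->]; have := ltn_ord (a i); have /= := internal i; lia.
have amA : a m \in A by apply: imset_f.
split=> [|f g]; first by apply/subsetP => f; rewrite in_DN2 // => /andP[].
rewrite !in_DN2 // => /andP[fA f_large] /andP[gA g_large].
have [f_op g_op] : order_preserving f /\ order_preserving g.
  by move: fA gA; rewrite !in_simplex => /andP[-> _] /andP[-> _].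
split.
  rewrite emap_add_simplex //=.
  by case/orP: (fibre_emap_add (a m) f_op g_op) => /subset_leq_card; apply: leq_trans.
rewrite emap_mul_simplex //=; apply: leq_trans f_large (subset_leq_card _).
exact/fibre_emap_mul/(internal_simplex_fixes A_internal).
Qed.
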